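(* Let $(a_N)$ be a sequence of positive numbers and, for each $N$, let $P_{N,a_N}$ be the probability on sequences $(n_j)_{j\ge0}$ of nonnegative integers with $\sum_jn_j=N$ given by $P_{N,a_N}((n_j))\propto e^{-a_N\sum_jjn_j}$. Let $\lambda_N=1-m_N/N$ with integers $0\le m_N\le N$, and suppose $\lambda_N\to\lambda\le1$ and $(1-\lambda_N)Na_N\to\infty$. Then $$P_{N,a_N}\Big(\frac{n_0}N\ge\lambda_N\Big)=e^{-(1+\epsilon_N)A_{N1}(\lambda_N)},\qquad A_{N1}(\lambda_N)=\frac{e^{-Na_N}\big(e^{\lambda_NNa_N}-1\big)}{e^{a_N}-1},$$ where $0<\epsilon_N<-\ln\big(1-e^{-(1-\lambda_N)Na_N}\big)\to0$.
   Context: This is the canonical ensemble of $N$ noninteracting bosons in a one-dimensional harmonic trap, $n_0$ being the ground-state occupation. *)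

From HB Require Import structures.
From mathcomp Require Import all_boot all_order all_algebra.
From mathcomp Require Import all_classical all_reals all_analysis.
Set Implicit Arguments. Unset Strict Implicit. Unset Printing Implicit Defensive.
Import Order.TTheory GRing.Theory Num.Theory.
Import numFieldNormedType.Exports.
Local Open Scope classical_set_scope.
Local Open Scope ring_scope.

(* A configuration of the canonical ensemble is an occupation sequence
   n : nat -> nat, (n j = number of bosons in level j).  *)

Definition npart (R : realType) (n : nat -> nat) : \bar R :=
  (\esum_(j in [set: nat]) ((n j)%:R : R)%:E)%E.

Definition energy (R : realType) (n : nat -> nat) : \bar R :=
  (\esum_(j in [set: nat]) (((j * n j)%N)%:R : R)%:E)%E.

Definition configs (R : realType) (N : nat) : set (nat -> nat) :=
  [set n | npart R n = (N%:R : R)%:E].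

(* Boltzmann weight e^{-a sum_j j n_j} (energy is finite on configs) *)
Definition weight (R : realType) (a : R) (n : nat -> nat) : R :=
  expR (- a * fine (energy R n)).

Definition canon_prob (R : realType) (N : nat) (a : R) (E : set (nat -> nat)) : R :=
  fine (\esum_(n in configs R N `&` E) (weight a n)%:E)%E /
  fine (\esum_(n in configs R N) (weight a n)%:E)%E.

Definition A_N1 (R : realType) (N : nat) (a lam : R) : R :=
  expR (- (N%:R * a)) * (expR (lam * N%:R * a) - 1) / (expR a - 1).

From HB Require Import structures.
From mathcomp Require Import all_boot all_order all_algebra.
From mathcomp Require Import all_classical all_reals all_analysis.
From mathcomp Require Import ring lra.
Import Order.TTheory GRing.Theory Num.Theory.
Import numFieldNormedType.Exports.
Local Open Scope classical_set_scope.
Local Open Scope ring_scope.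
Set Implicit Arguments. Unset Strict Implicit. Unset Printing Implicit Defensive.

(* With q = e^{-a}, the partition function satisfies Z_{N+1} = Z_N + q^{N+1} Z_{N+1}:
   an (N+1)-particle configuration either has an occupied ground level, and
   removing one ground particle costs no energy, or it is an (N+1)-particle
   configuration with every particle raised by one level, which costs N+1.
   The event n_0 >= N - m is the image of the m-particle configurations under
   adding N - m ground particles, so its probability is
   Z_m / Z_N = prod_(m < k <= N) (1 - q^k) = exp (- sum_(m < k <= N) - ln (1 - q^k)),
   while A_N1 = sum_(m < k <= N) q^k.  Termwise x < - ln (1 - x) <= x (- ln (1 - z) / z)
   for 0 < x <= z = q^m (concavity of ln), and - ln (1 - z) / z < 1 - ln (1 - z);
   since q^m = e^{-(1 - lambda_N) N a}, this traps eps_N between 0 and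
   - ln (1 - e^{-(1 - lambda_N) N a}), which tends to 0. *)

Section esum_lemmas.
Variable R : realType.
Local Open Scope ereal_scope.

Lemma ge0_esumZl (T : choiceType) (S : set T) (f : T -> \bar R) (r : R) :
  (0 <= r)%R -> (forall x, 0 <= f x) ->
  \esum_(i in S) (r%:E * f i) = r%:E * \esum_(i in S) f i.
Proof.
move=> r0 f0; rewrite /esum -ereal_supZl //; last first.
  by apply/set0P; exists 0; exists set0; [exact: fsets_set0|rewrite fsbig_set0].
congr ereal_sup; apply/seteqP; split => x /=.
  move=> [A hA <-]; exists (\sum_(i \in A) f i); first by exists A.
  by rewrite ge0_mule_fsumr.
by move=> [y [A hA <-] <-]; exists A => //; rewrite ge0_mule_fsumr.
Qed.

Lemma le_esum_subset (T : choiceType) (S1 S2 : set T) (f : T -> \bar R) :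
  S1 `<=` S2 -> (forall x, 0 <= f x) ->
  \esum_(i in S1) f i <= \esum_(i in S2) f i.
Proof.
move=> S12 f0; rewrite (esumID S1 S2) // setIidr //.
by rewrite leeDl // esum_ge0.
Qed.

Lemma esum_dirac_nat (j : nat) (x : \bar R) : 0 <= x ->
  \esum_(i in [set: nat]) (if i == j then x else 0) = x.
Proof.
move=> x0; rewrite (esumID [set j]); last by move=> i _; case: ifP.
by rewrite setTI esum_set1 ?eqxx // esum1 ?adde0 // => i [_ /= /eqP/negbTE ->].
Qed.

Lemma esum_nat_shift (f : nat -> \bar R) : (forall i, 0 <= f i) -> f 0%N = 0 ->
  \esum_(i in [set: nat]) f i = \esum_(i in [set: nat]) f i.+1.
Proof.
move=> f0 f00; rewrite (esumID [set 0%N]) // setTI esum_set1 // f00 add0e.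
have -> : [set: nat] `&` ~` [set 0%N] = succn @` [set: nat].
  apply/seteqP; split => -[|i] //=; first by case=> _ /(_ erefl).
    by move=> _; exists i.
  by case=> j _.
by rewrite esum_image //; move=> x y _ _ [].
Qed.

Lemma esum_geometric_le (q : R) : (0 <= q < 1)%R ->
  \esum_(j in [set: nat]) (q ^+ j)%:E <= ((1 - q)^-1)%:E.
Proof.
case/andP=> q0 q1; have qj0 j : 0 <= (q ^+ j)%:E by rewrite lee_fin exprn_ge0.
rewrite -nneseries_esumT //; apply: lime_le.
  by apply: is_cvg_nneseries => n _ _.
apply: nearW => n; rewrite sumEFin lee_fin -[leRHS]div1r.
rewrite ler_pdivlMr ?subr_gt0 // big_mkord mulrC -opprB mulNr -subrX1 opprB.
by rewrite lerBlDr lerDl exprn_ge0.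
Qed.

End esum_lemmas.

Section occupations.
Variable R : realType.
Implicit Types (c n : nat -> nat) (N j k : nat).

Definition add_level j k c : nat -> nat := fun i => (c i + (i == j) * k)%N.

Definition sub_level j k n : nat -> nat :=
  fun i => if i == j then (n i - k)%N else n i.

Definition raise_levels c : nat -> nat :=
  fun i => if i is i'.+1 then c i' else 0%N.

Lemma add_levelK j k n : (k <= n j)%N -> add_level j k (sub_level j k n) = n.
Proof.
move=> kn; apply: funext => i; rewrite /add_level /sub_level.
by case: eqP => [->|]; rewrite ?mul1n ?subnK // ?mul0n ?addn0.
Qed.

Lemma add_level_inj j k : injective (add_level j k).
Proof.
move=> c c' e; apply: funext => i.
by have := congr1 (fun f => f i) e; rewrite /add_level => /addIn.
Qed.

Lemma raise_levels_inj : injective raise_levels.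
Proof. by move=> c c' e; apply: funext => i; have := congr1 (fun f => f i.+1) e. Qed.

Lemma npart_add_level j k c :
  npart R (add_level j k c) = (npart R c + (k%:R)%:E)%E.
Proof.
rewrite /npart /add_level; under eq_esum => i _ do rewrite natrD EFinD.
rewrite esumD // -[in RHS](@esum_dirac_nat _ j (k%:R)%:E) //; congr (_ + _)%E.
by apply: eq_esum => i _; case: eqP; rewrite ?mul1n ?mul0n.
Qed.

Lemma energy_add_level j k c :
  energy R (add_level j k c) = (energy R c + ((j * k)%N%:R)%:E)%E.
Proof.
rewrite /energy /add_level; under eq_esum => i _ do rewrite mulnDr natrD EFinD.
rewrite esumD // -[in RHS](@esum_dirac_nat _ j ((j * k)%N%:R)%:E) //.
congr (_ + _)%E; apply: eq_esum => i _.
by case: eqP => [->|]; rewrite ?mul1n ?mul0n ?muln0.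
Qed.

Lemma npart_raise_levels c : npart R (raise_levels c) = npart R c.
Proof. by rewrite /npart esum_nat_shift. Qed.

Lemma energy_raise_levels c :
  energy R (raise_levels c) = (energy R c + npart R c)%E.
Proof.
rewrite /energy esum_nat_shift //= /npart -esumD //; apply: eq_esum => i _.
by rewrite -EFinD -natrD mulSn addnC.
Qed.

Lemma le_npart c j : (((c j)%:R)%:E <= npart R c)%E.
Proof.
apply: esum_ge; exists [set j]; last by rewrite fsbig_set1.
by split => //; exact: finite_set1.
Qed.

Lemma configs0 : configs R 0 = [set fun _ => 0%N].
Proof.
apply/seteqP; split => c /=; last by move=> ->; rewrite /configs /= /npart esum1.
move=> c0; apply: funext => j; apply/eqP.
by have := le_npart c j; rewrite c0 lee_fin ler_nat leqn0.
Qed.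

Lemma energy_configs0 c : configs R 0 c -> energy R c = 0%E.
Proof. by rewrite configs0 => ->; rewrite /energy esum1 // => i _; rewrite muln0. Qed.

Lemma configs_add_level N j k c :
  configs R N c -> configs R (N + k) (add_level j k c).
Proof. by rewrite /configs /= npart_add_level => ->; rewrite -EFinD -natrD. Qed.

Lemma configs_sub_level N j k n :
  configs R (N + k) n -> (k <= n j)%N -> configs R N (sub_level j k n).
Proof.
rewrite /configs /= => nNk kn; move: nNk; rewrite -{1}(add_levelK kn).
rewrite npart_add_level natrD; case: (npart R _) => //= r [].
by move=> /addIr ->.
Qed.

Lemma configs_raise_levels N c :
  configs R N (raise_levels c) = configs R N c.
Proof. by rewrite /configs /= npart_raise_levels. Qed.

Lemma configs_succ_occupied N n : configs R N.+1 n -> exists j, (0 < n j)%N.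
Proof.
rewrite /configs /= => nN; apply/not_existsP => n0.
have : npart R n = 0%E by rewrite /npart esum1 // => i _; case: (n i) (n0 i).
by rewrite nN => -[]; apply/eqP; rewrite pnatr_eq0.
Qed.

Lemma configs_energy_fin N n : configs R N n -> energy R n \is a fin_num.
Proof.
elim: N n => [|N IH] n nN; first by rewrite (energy_configs0 nN).
have [j nj] := configs_succ_occupied nN.
rewrite -(add_levelK nj) energy_add_level fin_numD /= andbT.
by apply/IH/(configs_sub_level (k := 1)); rewrite ?addn1.
Qed.

Lemma configs_ground_ge N k :
  configs R (N + k) `&` [set n | (k <= n 0)%N] = add_level 0 k @` configs R N.
Proof.
apply/seteqP; split => n /=.
  case=> nNk kn; exists (sub_level 0 k n); first exact: configs_sub_level.
  exact: add_levelK.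
case=> c cN <-; split; first exact: configs_add_level.
by rewrite /add_level mul1n leq_addl.
Qed.

Lemma configs_ground_empty N :
  configs R N `&` ~` [set n | (0 < n 0)%N] = raise_levels @` configs R N.
Proof.
apply/seteqP; split => n /=.
  case=> nN /negP; rewrite -eqn0Ngt => /eqP n00.
  have nE : raise_levels (fun i => n i.+1) = n by apply: funext => -[].
  by exists (fun i => n i.+1); rewrite // -configs_raise_levels nE.
by case=> c cN <-; rewrite configs_raise_levels.
Qed.

End occupations.

Section partition_function.
Variables (R : realType) (a : R).
Hypothesis a_gt0 : 0 < a.
Implicit Types (c n : nat -> nat) (N j k : nat).

Let q := expR (- a).
Let q_gt0 : 0 < q. Proof. exact: expR_gt0. Qed.
Let q_lt1 : q < 1. Proof. by rewrite expR_lt1 oppr_lt0. Qed.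

Lemma weight_ge0 n : (0 <= (weight a n)%:E)%E.
Proof. by rewrite lee_fin expR_ge0. Qed.

Lemma weight_add_ground k c : weight a (add_level 0 k c) = weight a c.
Proof. by rewrite /weight energy_add_level mul0n adde0. Qed.

Lemma weight_add_level N j c : configs R N c ->
  weight a (add_level j 1 c) = weight a c * q ^+ j.
Proof.
move=> cN; rewrite /weight energy_add_level muln1 fineD ?(configs_energy_fin cN) //=.
by rewrite mulrDr expRD [- a * _%:R]mulrC expRM_natl.
Qed.

Lemma weight_raise_levels N c : configs R N c ->
  weight a (raise_levels c) = weight a c * q ^+ N.
Proof.
move=> cN; rewrite /weight energy_raise_levels; move: (cN); rewrite /configs /= => ->.
by rewrite fineD ?(configs_energy_fin cN) //= mulrDr expRD [- a * _%:R]mulrC expRM_natl.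
Qed.

Definition partition_esum N := (\esum_(n in configs R N) (weight a n)%:E)%E.

Lemma partition_esum0 : partition_esum 0 = 1%E.
Proof.
rewrite /partition_esum configs0 esum_set1 ?weight_ge0 // /weight.
have -> : fine (energy R (fun=> 0%N)) = 0 by rewrite energy_configs0 ?configs0.
by rewrite mulr0 expR0.
Qed.

Lemma partition_esum_rec N :
  partition_esum N.+1 = (partition_esum N + (q ^+ N.+1)%:E * partition_esum N.+1)%E.
Proof.
rewrite {1}/partition_esum (esumID [set n | (0 < n 0)%N]); last first.
  by move=> *; exact: weight_ge0.
rewrite -addn1 configs_ground_ge configs_ground_empty addn1.
rewrite esum_image; last by move=> x y _ _; exact: add_level_inj.
rewrite esum_image; last by move=> x y _ _; exact: raise_levels_inj.
congr (_ + _)%E; first by apply: eq_esum => c _; rewrite weight_add_ground.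
rewrite /partition_esum -ge0_esumZl ?exprn_ge0 ?(ltW q_gt0) //; last exact: weight_ge0.
by apply: eq_esum => c cN; rewrite (weight_raise_levels cN) EFinM muleC.
Qed.

(* Removing one particle from an occupied level j maps configs N.+1 injectively
   into configs N * nat and divides the weight by q ^+ j; summing over j gives
   the geometric factor. *)
Lemma partition_esum_succ_le N :
  (partition_esum N.+1 <= ((1 - q)^-1)%:E * partition_esum N)%E.
Proof.
pose lvl n := xget 0%N [set j | (0 < n j)%N].
have lvlP n : configs R N.+1 n -> (0 < n (lvl n))%N.
  by move=> nN; exact: xgetPex (configs_succ_occupied nN).
pose remove n := (sub_level (lvl n) 1 n, lvl n).
have -> : partition_esum N.+1 =
    (\esum_(p in remove @` configs R N.+1) (weight a (add_level p.2 1 p.1))%:E)%E.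
  rewrite esum_image => [|x y /set_mem xN /set_mem yN].
    by apply: eq_esum => n nN /=; rewrite add_levelK ?lvlP.
  by move/(congr1 (fun p => add_level p.2 1 p.1)); rewrite /= !add_levelK ?lvlP.
apply: (@le_trans _ _ (\esum_(p in configs R N `*`` (fun=> [set: nat]))
    (weight a (add_level p.2 1 p.1))%:E)%E).
  apply: le_esum_subset; last by move=> *; exact: weight_ge0.
  move=> _ [n nN <-]; split => //=.
  by apply: configs_sub_level; rewrite ?addn1 ?lvlP.
rewrite -(esum_esum (a := fun c j => (weight a (add_level j 1 c))%:E)); last first.
  by move=> *; exact: weight_ge0.
rewrite /partition_esum -ge0_esumZl ?invr_ge0 ?subr_ge0 ?(ltW q_lt1) //; last first.
  exact: weight_ge0.
apply: le_esum => c cN.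
under eq_esum => j _ do rewrite (weight_add_level j cN) EFinM.
rewrite ge0_esumZl ?expR_ge0 //; last first.
  by move=> j; rewrite lee_fin exprn_ge0 ?(ltW q_gt0).
rewrite [X in (_ <= X)%E]muleC lee_wpmul2l ?weight_ge0 //.
by apply: esum_geometric_le; rewrite (ltW q_gt0) q_lt1.
Qed.

Lemma partition_esum_ge1 N : (1 <= partition_esum N)%E.
Proof.
elim: N => [|N IH]; first by rewrite partition_esum0.
rewrite partition_esum_rec; apply: (le_trans IH); rewrite leeDl // mule_ge0 //.
  by rewrite lee_fin exprn_ge0 ?(ltW q_gt0).
by apply: esum_ge0 => *; exact: weight_ge0.
Qed.

Lemma partition_esum_fin_num N : partition_esum N \is a fin_num.
Proof.
rewrite ge0_fin_numE ?(le_trans _ (partition_esum_ge1 N)) //.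
apply: (@le_lt_trans _ _ ((((1 - q)^-1) ^+ N)%:E)); last exact: ltry.
elim: N => [|N IH]; first by rewrite partition_esum0 expr0.
apply: (le_trans (partition_esum_succ_le N)); rewrite exprS EFinM lee_wpmul2l //.
by rewrite lee_fin invr_ge0 subr_ge0 (ltW q_lt1).
Qed.

Definition partition_fun N := fine (partition_esum N).

Lemma partition_esumE N : partition_esum N = (partition_fun N)%:E.
Proof. by rewrite fineK ?partition_esum_fin_num. Qed.

Lemma partition_fun_gt0 N : 0 < partition_fun N.
Proof.
by have := partition_esum_ge1 N; rewrite partition_esumE lee_fin; apply: lt_le_trans.
Qed.

Lemma partition_fun_rec N : partition_fun N.+1 * (1 - q ^+ N.+1) = partition_fun N.
Proof.
have := partition_esum_rec N; rewrite !partition_esumE -EFinM -EFinD => -[e].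
by rewrite mulrBr mulr1 {1}e [partition_fun _ * _]mulrC addrK.
Qed.

Lemma partition_fun_ratio m N : (m <= N)%N ->
  partition_fun m / partition_fun N = \prod_(m <= k < N) (1 - q ^+ k.+1).
Proof.
have Z_neq0 k : partition_fun k != 0 by rewrite gt_eqF ?partition_fun_gt0.
elim: N => [|N IH]; first by rewrite leqn0 => /eqP ->; rewrite big_geq ?divff.
rewrite leq_eqVlt => /orP[/eqP ->|]; first by rewrite big_geq ?divff.
rewrite ltnS => mN; rewrite big_nat_recr //= -IH // -(partition_fun_rec N).
by rewrite invfM mulrA mulfVK // subr_eq0 gt_eqF // exprn_ilt1 ?(ltW q_gt0).
Qed.

End partition_function.

Section ground_event.
Variables (R : realType) (a : R).
Hypothesis a_gt0 : 0 < a.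

Lemma ground_fraction_geE (N m x : nat) : (0 < N)%N -> (m <= N)%N ->
  (1 - m%:R / N%:R <= x%:R / N%:R :> R) = (N - m <= x)%N.
Proof.
move=> N_gt0 mN; rewrite -(@ler_pM2r _ N%:R) ?ltr0n // mulrBl mul1r.
by rewrite !divfK ?pnatr_eq0 -?lt0n // -natrB // ler_nat.
Qed.

Lemma canon_prob_ground_ge N m : (0 < N)%N -> (m <= N)%N ->
  canon_prob N a [set n | 1 - m%:R / N%:R <= (n 0%N)%:R / N%:R :> R] =
  \prod_(m <= k < N) (1 - expR (- a) ^+ k.+1).
Proof.
move=> N_gt0 mN; rewrite -(partition_fun_ratio a_gt0 mN) /canon_prob.
have -> : configs R N `&` [set n | 1 - m%:R / N%:R <= (n 0%N)%:R / N%:R :> R] =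
    add_level 0 (N - m) @` configs R m.
  rewrite -configs_ground_ge subnKC //; congr (_ `&` _).
  by apply: funext => n /=; rewrite ground_fraction_geE.
rewrite esum_image; last by move=> x y _ _; exact: add_level_inj.
by congr (fine _ / _); apply: eq_esum => c _; rewrite weight_add_ground.
Qed.

End ground_event.

Lemma geometric_sum_nat (R : comRingType) (q : R) m N : (m <= N)%N ->
  (\sum_(m <= k < N) q ^+ k.+1) * (1 - q) = q ^+ m.+1 - q ^+ N.+1.
Proof.
elim: N => [|N IH]; first by rewrite leqn0 => /eqP ->; rewrite big_geq // mul0r subrr.
rewrite leq_eqVlt => /orP[/eqP ->|]; first by rewrite big_geq // mul0r subrr.
by rewrite ltnS => mN; rewrite big_nat_recr //= mulrDl IH // !exprS; ring.
Qed.

Lemma A_N1_geometric (R : realType) (a : R) N m :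
  0 < a -> (0 < N)%N -> (m <= N)%N ->
  A_N1 N a (1 - m%:R / N%:R) = \sum_(m <= k < N) expR (- a) ^+ k.+1.
Proof.
move=> a_gt0 N_gt0 mN; have [k Nmk] : exists k, N = (m + k)%N.
  by exists (N - m)%N; rewrite subnKC.
set q := expR (- a); have q_gt0 : 0 < q by exact: expR_gt0.
have q_neq1 : 1 - q != 0 by rewrite subr_eq0 eq_sym lt_eqF // expR_lt1 oppr_lt0.
have aE : expR a = q^-1 by rewrite /q expRN invrK.
rewrite /A_N1 mulrBl mul1r divfK ?pnatr_eq0 -?lt0n // -natrB // Nmk addKn.
rewrite -mulrN !expRM_natl -/q aE; apply: (mulIf q_neq1).
rewrite geometric_sum_nat ?leq_addr // exprVn !exprS !exprD.
have qk : q ^+ k != 0 by rewrite expf_neq0 // gt_eqF.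
by field; rewrite gt_eqF // mulN1r q_neq1 qk.
Qed.

Section ln1mN.
Variable R : realType.
Implicit Types x z : R.

Lemma lt_ln1mN x : 0 < x < 1 -> x < - ln (1 - x).
Proof.
move=> /andP[x_gt0 x_lt1]; rewrite ltrNr -ltr_expR lnK ?posrE ?subr_gt0 //.
by rewrite expR_gt1Dx // oppr_eq0 gt_eqF.
Qed.

(* Concavity of ln on the chord from 1 - z to 1. *)
Lemma ln1mN_le_chord x z : 0 < x -> x <= z -> z < 1 ->
  - ln (1 - x) <= x * (- ln (1 - z) / z).
Proof.
move=> x_gt0 xz z_lt1; have z_gt0 : 0 < z by apply: lt_le_trans xz.
have t_ge0 : 0 <= x / z by rewrite divr_ge0 ?(ltW x_gt0) ?(ltW z_gt0).
have t_le1 : x / z <= 1 by rewrite ler_pdivrMr // mul1r.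
have := @concave_ln R (Itv01 t_ge0 t_le1) (1 - z) 1.
rewrite subr_gt0 z_lt1 ltr01 => /(_ isT isT).
rewrite !convRE /= ln1 mulr0 addr0 /unstable.onem.
have -> : x / z * (1 - z) + (1 - x / z) * 1 = 1 - x by field; rewrite gt_eqF.
by rewrite mulNr mulrN lerN2 mulrCA mulrC.
Qed.

Lemma ln1mN_div_lt z : 0 < z < 1 -> - ln (1 - z) / z < 1 - ln (1 - z).
Proof.
move=> /andP[z_gt0 z_lt1]; set y := 1 - z.
have y_gt0 : 0 < y by rewrite subr_gt0.
have lny : - ln y < y^-1 - 1.
  rewrite -lnV ?posrE // -ltr_expR lnK ?posrE ?invr_gt0 //.
  rewrite -{1}[y^-1](subrK 1) addrC expR_gt1Dx //.
  by rewrite subr_eq0 invr_eq1 lt_eqF // ltrBlDr ltrDl.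
have {}lny : - ln y * y < 1 - y.
  by rewrite -(ltr_pM2r y_gt0) mulrBl mulVf ?gt_eqF // mul1r in lny.
rewrite ltr_pdivrMr // mulrDl mul1r.
have -> : z = 1 - y by rewrite /y opprB addrC subrK.
lra.
Qed.

Lemma sum_ln1mN_bounds (q : R) (m N : nat) : 0 < q < 1 -> (0 < m < N)%N ->
  \sum_(m <= k < N) q ^+ k.+1 < \sum_(m <= k < N) - ln (1 - q ^+ k.+1) /\
  \sum_(m <= k < N) - ln (1 - q ^+ k.+1) <
    (1 - ln (1 - q ^+ m)) * \sum_(m <= k < N) q ^+ k.+1.
Proof.
move=> /andP[q_gt0 q_lt1] /andP[m_gt0 mN].
have qk_bounds k : (0 < k)%N -> 0 < q ^+ k < 1.
  by move=> k_gt0; rewrite exprn_gt0 // exprn_ilt1 ?(ltW q_gt0) -?lt0n.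
split.
  apply: ltr_sum; last by move=> k _; apply: lt_ln1mN; exact: qk_bounds.
  by apply/hasP; exists m; rewrite // mem_index_iota leqnn.
apply: (@le_lt_trans _ _ (- ln (1 - q ^+ m) / q ^+ m * \sum_(m <= k < N) q ^+ k.+1)).
  rewrite mulr_sumr; apply: ler_sum_nat => k /andP[mk kN].
  rewrite mulrC; apply: ln1mN_le_chord; first by case/andP: (qk_bounds k.+1 isT).
    by rewrite ler_wiXn2l ?(ltW q_gt0) ?(ltW q_lt1) // ltnW.
  by case/andP: (qk_bounds m m_gt0).
rewrite ltr_pM2r ?ln1mN_div_lt ?qk_bounds //.
rewrite big_ltn // ltr_wpDr ?exprn_gt0 // sumr_ge0 // => k _.
by rewrite exprn_ge0 ?(ltW q_gt0).
Qed.

End ln1mN.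

Lemma ground_event_estimate (R : realType) (a : R) (N m : nat) :
  0 < a -> (0 < m)%N -> (m <= N)%N ->
  exists eps : R,
    canon_prob N a [set n | 1 - m%:R / N%:R <= (n 0%N)%:R / N%:R :> R] =
      expR (- ((1 + eps) * A_N1 N a (1 - m%:R / N%:R))) /\
    0 < eps /\ eps < - ln (1 - expR (- (m%:R * a))).
Proof.
move=> a_gt0 m_gt0 mN; have N_gt0 : (0 < N)%N := leq_trans m_gt0 mN.
set q := expR (- a); have q_gt0 : 0 < q by exact: expR_gt0.
have q_lt1 : q < 1 by rewrite expR_lt1 oppr_lt0.
have qk_lt1 k : (0 < k)%N -> q ^+ k < 1.
  by move=> k_gt0; rewrite exprn_ilt1 ?(ltW q_gt0) -?lt0n.
rewrite canon_prob_ground_ge // A_N1_geometric // -mulrN expRM_natl -/q.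
set A := \sum_(m <= k < N) q ^+ k.+1.
set s := \sum_(m <= k < N) - ln (1 - q ^+ k.+1).
have -> : \prod_(m <= k < N) (1 - q ^+ k.+1) = expR (- s).
  rewrite /s sumrN opprK expR_sum; apply: eq_bigr => k _.
  by rewrite lnK // posrE subr_gt0 qk_lt1.
have c_gt0 : 0 < - ln (1 - q ^+ m).
  by rewrite oppr_gt0 ln_lt0 // subr_gt0 qk_lt1 // ltrBlDr ltrDl exprn_gt0.
have [mN'|Nm] := ltnP m N.
  have [As sA] : A < s /\ s < (1 - ln (1 - q ^+ m)) * A.
    by apply: sum_ln1mN_bounds; rewrite ?q_gt0 ?q_lt1 ?m_gt0.
  have A_gt0 : 0 < A.
    rewrite /A big_ltn // ltr_wpDr ?exprn_gt0 // sumr_ge0 // => k _.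
    by rewrite exprn_ge0 ?(ltW q_gt0).
  exists (s / A - 1); rewrite addrC subrK divfK ?gt_eqF //; split => //.
  by rewrite subr_gt0 ltr_pdivlMr ?mul1r // ltrBlDl ltr_pdivrMr.
exists (- ln (1 - q ^+ m) / 2); rewrite /A /s !big_geq // mulr0 oppr0.
by split => //; split; [rewrite divr_gt0|rewrite ltr_pdivrMr // ltr_pMr // ltr1n].
Qed.

Lemma cvg_ln1m_expRN (R : realType) (T : Type) (F : set_system T) {FF : Filter F}
    (f : T -> R) :
  f @ F --> +oo -> (fun t => - ln (1 - expR (- f t))) @ F --> 0.
Proof.
move=> f_cvg; have h : (fun t => 1 - expR (- f t)) @ F --> (1 : R).
  rewrite -[X in _ --> X]subr0; apply: cvgB; first exact: cvg_cst.
  exact: cvg_comp f_cvg (@cvgr_expR R).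
rewrite -oppr0 -ln1; apply: cvgN; exact: cvg_comp h (continuous_ln ltr01).
Qed.

Unset Implicit Arguments. Set Strict Implicit.

Theorem proposition4 (R : realType) (a : nat -> R) (m : nat -> nat) (lam : R) :
  (forall N, 0 < a N) ->
  (forall N, (m N <= N)%N) ->
  let lamN := fun N : nat => 1 - (m N)%:R / N%:R in
  lamN @ \oo --> lam ->
  lam <= 1 ->
  (fun N : nat => (1 - lamN N) * N%:R * a N) @ \oo --> +oo ->
  exists eps : nat -> R,
    (\forall N \near \oo,
       canon_prob N (a N) [set n | lamN N <= (n 0%N)%:R / N%:R] =
         expR (- ((1 + eps N) * A_N1 N (a N) (lamN N))) /\
       0 < eps N /\
       eps N < - ln (1 - expR (- ((1 - lamN N) * N%:R * a N)))) /\
    (fun N : nat => - ln (1 - expR (- ((1 - lamN N) * N%:R * a N)))) @ \oo --> 0.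
Proof.
move=> a_gt0 m_le lamN _ _ X_cvg.
have XE N : (1 - lamN N) * N%:R * a N = (m N)%:R * a N.
  rewrite /lamN opprB addrC subrK; case: N (m_le N) => [|N] mN.
    by rewrite leqn0 in mN; rewrite (eqP mN) !mul0r.
  by rewrite divfK // pnatr_eq0.
have /choice[eps eps_spec] N : exists e : R, (0 < m N)%N ->
    canon_prob N (a N) [set n | lamN N <= (n 0%N)%:R / N%:R] =
      expR (- ((1 + e) * A_N1 N (a N) (lamN N))) /\
    0 < e /\ e < - ln (1 - expR (- ((1 - lamN N) * N%:R * a N))).
  have [_|m_gt0] := posnP (m N); first by exists 0.
  have [e] := ground_event_estimate (a_gt0 N) m_gt0 (m_le N).
  by rewrite -XE; exists e.
exists eps; split; last exact: cvg_ln1m_expRN.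
near=> N; apply: eps_spec.
have : 0 < (1 - lamN N) * N%:R * a N by near: N; exact: cvgry_gt X_cvg 0.
by rewrite XE pmulr_lgt0 // ltr0n.
Unshelve. all: end_near.
Qed.
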